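(* Let $g$ be an associative algebra equipped with a nondegenerate symmetric bilinear form $\langle\cdot,\cdot\rangle$ satisfying $\langle u v,w\rangle=\langle u,v w\rangle$. Let $n\ge1$ and $\mathbf{g}=g\oplus\cdots\oplus g$ ($n$ copies) with componentwise multiplication. Let $\mathbf{C},\mathbf{A}$ be linear operators on $\mathbf{g}$ written in components as $(\mathbf{C}(\mathbf{u}))_i=\sum_j C_{ij}(u_j)$, $(\mathbf{A}(\mathbf{u}))_i=\sum_j A_{ij}(u_j)$ with linear operators $C_{ij},A_{ij}$ on $g$. Then Hom$(\mathbf{C},\mathbf{A})$ holds on $\mathbf{g}$ if and only if: (1) Hom$(C_{ij},A_{jj})$ holds for all $1\le i,j\le n$; and (2) for all $1\le i,j,k\le n$ with $j<k$ and all $X,Y\in g$: $[C_{ij}(X),C_{ik}(Y)]=C_{ik}\big([A_{kj}(X),Y]\big)+C_{ij}\big([X,A_{jk}(Y)]\big)$.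
   Context: $[X,Y]=XY-YX$ (componentwise in $\mathbf{g}$). For linear operators $S,A$ on an associative algebra, Hom$(S,A)$ means $[S(X),S(Y)]=S\big([A(X),Y]+[X,A(Y)]\big)$ for all $X,Y$. *)

From mathcomp Require Import all_boot all_algebra.
Set Implicit Arguments. Unset Strict Implicit. Unset Printing Implicit Defensive.
Import GRing.Theory.
Local Open Scope ring_scope.

Definition comm (V : zmodType) (mul : V -> V -> V) (x y : V) : V :=
  mul x y - mul y x.

Definition HomRel (V : zmodType) (mul : V -> V -> V) (S A : V -> V) : Prop :=
  forall x y, comm mul (S x) (S y) = S (comm mul (A x) y + comm mul x (A y)).

Definition assoc_algebra (K : fieldType) (V : lmodType K) (mul : V -> V -> V) : Prop :=
  [/\ (forall a u v w, mul (a *: u + v) w = a *: mul u w + mul v w),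
      (forall a u v w, mul w (a *: u + v) = a *: mul w u + mul w v)
    & (forall u v w, mul (mul u v) w = mul u (mul v w))].

Definition invariant_form (K : fieldType) (V : lmodType K) (mul : V -> V -> V)
    (B : V -> V -> K) : Prop :=
  [/\ (forall a u v w, B (a *: u + v) w = a * B u w + B v w),
      (forall u v, B u v = B v u),
      (forall u, (forall v, B u v = 0) -> u = 0)
    & (forall u v w, B (mul u v) w = B u (mul v w))].

Definition bmul (K : fieldType) (V : lmodType K) (n : nat) (mul : V -> V -> V)
    (u v : {ffun 'I_n -> V}) : {ffun 'I_n -> V} :=
  [ffun i => mul (u i) (v i)].

Definition bop (K : fieldType) (V : lmodType K) (n : nat)
    (C : 'I_n -> 'I_n -> {linear V -> V}) (u : {ffun 'I_n -> V}) : {ffun 'I_n -> V} :=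
  [ffun i => \sum_(j < n) C i j (u j)].

From mathcomp Require Import all_boot all_algebra.
Set Implicit Arguments. Unset Strict Implicit. Unset Printing Implicit Defensive.
Import GRing.Theory.
Local Open Scope ring_scope.

(* Product and operators act componentwise and the commutator is biadditive,
   so Hom(C, A) on g^n reduces to its instances on vectors supported at a
   single coordinate; for the coordinates j, k and the output component i
   these read [C_ij X, C_ik Y] = C_ik [A_kj X, Y] + C_ij [X, A_jk Y].  The
   case j > k is the case j < k with the roles of X and Y exchanged, by
   antisymmetry of the commutator, and the case j = k is Hom(C_ij, A_jj). *)

Section Commutator.
Variables (V : zmodType) (mul : V -> V -> V).
Hypothesis mulDl : forall u v w, mul (u + v) w = mul u w + mul v w.
Hypothesis mulDr : forall u v w, mul w (u + v) = mul w u + mul w v.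

Lemma mul0l w : mul 0 w = 0.
Proof. by apply: (addrI (mul 0 w)); rewrite -mulDl !addr0. Qed.

Lemma mul0r w : mul w 0 = 0.
Proof. by apply: (addrI (mul w 0)); rewrite -mulDr !addr0. Qed.

Lemma commDl u v w : comm mul (u + v) w = comm mul u w + comm mul v w.
Proof. by rewrite /comm mulDl mulDr opprD addrACA. Qed.

Lemma commDr u v w : comm mul w (u + v) = comm mul w u + comm mul w v.
Proof. by rewrite /comm mulDl mulDr opprD addrACA. Qed.

Lemma comm0l w : comm mul 0 w = 0.
Proof. by rewrite /comm mul0l mul0r subr0. Qed.

Lemma comm0r w : comm mul w 0 = 0.
Proof. by rewrite /comm mul0l mul0r subr0. Qed.

Lemma commC u v : comm mul u v = - comm mul v u.
Proof. by rewrite /comm opprB. Qed.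

Lemma comm_suml (I : Type) (r : seq I) (P : pred I) (F : I -> V) w :
  comm mul (\sum_(i <- r | P i) F i) w = \sum_(i <- r | P i) comm mul (F i) w.
Proof. exact: (big_morph (comm mul^~ w) (fun u v => commDl u v w) (comm0l w)). Qed.

Lemma comm_sumr (I : Type) (r : seq I) (P : pred I) (F : I -> V) w :
  comm mul w (\sum_(i <- r | P i) F i) = \sum_(i <- r | P i) comm mul w (F i).
Proof. exact: (big_morph (comm mul w) (fun u v => commDr u v w) (comm0r w)). Qed.

End Commutator.

Lemma assoc_algebra_mulDl (K : fieldType) (V : lmodType K) (mul : V -> V -> V) :
  assoc_algebra mul -> forall u v w, mul (u + v) w = mul u w + mul v w.
Proof. by case=> mulZDl _ _ u v w; rewrite -[u in LHS]scale1r mulZDl scale1r. Qed.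

Lemma assoc_algebra_mulDr (K : fieldType) (V : lmodType K) (mul : V -> V -> V) :
  assoc_algebra mul -> forall u v w, mul w (u + v) = mul w u + mul w v.
Proof. by case=> _ mulZDr _ u v w; rewrite -[u in LHS]scale1r mulZDr scale1r. Qed.

Section BlockOperators.
Variables (K : fieldType) (V : lmodType K) (mul : V -> V -> V) (n : nat).
Hypothesis mulDl : forall u v w, mul (u + v) w = mul u w + mul v w.
Hypothesis mulDr : forall u v w, mul w (u + v) = mul w u + mul w v.
Variables C A : 'I_n -> 'I_n -> {linear V -> V}.

Definition delta_ffun (j : 'I_n) (x : V) : {ffun 'I_n -> V} :=
  [ffun l => if l == j then x else 0].

Definition HomRel_blocks (i j k : 'I_n) : Prop :=
  forall x y, comm mul (C i j x) (C i k y) =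
              C i k (comm mul (A k j x) y) + C i j (comm mul x (A j k y)).

Lemma comm_bmulE (u v : {ffun 'I_n -> V}) i :
  comm (bmul mul) u v i = comm mul (u i) (v i).
Proof. by rewrite /comm /bmul !ffunE. Qed.

Lemma bop_delta (D : 'I_n -> 'I_n -> {linear V -> V}) i j x :
  bop D (delta_ffun j x) i = D i j x.
Proof.
rewrite /bop ffunE (bigD1 j) //= ffunE eqxx big1 ?addr0 // => l /negbTE ljF.
by rewrite ffunE ljF linear0.
Qed.

Lemma HomRel_bop_blocks i j k :
  HomRel (bmul mul) (bop C) (bop A) -> HomRel_blocks i j k.
Proof.
move=> hom x y.
have := congr1 (fun f : {ffun 'I_n -> V} => f i) (hom (delta_ffun j x) (delta_ffun k y)).
rewrite /= comm_bmulE !bop_delta => ->.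
rewrite /bop ffunE.
under eq_bigr => l _ do rewrite ffunE !comm_bmulE !bop_delta !ffunE linearD.
rewrite big_split /= (bigD1 k) //= eqxx big1 ?addr0; last first.
  by move=> l /negbTE ->; rewrite comm0r // linear0.
rewrite (bigD1 j) //= eqxx big1 ?addr0 // => l /negbTE ->.
by rewrite comm0l // linear0.
Qed.

Lemma blocks_HomRel_bop :
  (forall i j k, HomRel_blocks i j k) -> HomRel (bmul mul) (bop C) (bop A).
Proof.
move=> blocks u v; apply/ffunP => i.
rewrite comm_bmulE /bop !ffunE comm_suml //.
under eq_bigr => j _ do rewrite comm_sumr // (eq_bigr _ (fun k _ => blocks i j k _ _)).
under eq_bigr do rewrite big_split /=.
rewrite big_split /= exchange_big /=; apply/esym.
under eq_bigr => l _ do rewrite ffunE !comm_bmulE !ffunE comm_suml // comm_sumr //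
  linearD !linear_sum.
by rewrite big_split.
Qed.

Lemma HomRel_bopP :
  HomRel (bmul mul) (bop C) (bop A) <-> forall i j k, HomRel_blocks i j k.
Proof.
split=> [hom i j k|]; [exact: HomRel_bop_blocks | exact: blocks_HomRel_bop].
Qed.

Lemma HomRel_blocks_diag i j : HomRel_blocks i j j <-> HomRel mul (C i j) (A j j).
Proof. by split=> hom x y; rewrite hom -raddfD. Qed.

Lemma HomRel_blocks_sym i j k : HomRel_blocks i j k -> HomRel_blocks i k j.
Proof.
move=> hom x y; rewrite commC hom (commC mul (A k j y)) (commC mul y).
by rewrite !linearN opprD !opprK addrC.
Qed.

End BlockOperators.

Theorem proposition4 (K : fieldType) (V : lmodType K) (mul : V -> V -> V)
    (B : V -> V -> K) (n : nat)
    (C A : 'I_n -> 'I_n -> {linear V -> V}) :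
  assoc_algebra mul -> invariant_form mul B -> (1 <= n)%N ->
  (HomRel (bmul mul) (bop C) (bop A) <->
   ((forall i j : 'I_n, HomRel mul (C i j) (A j j)) /\
    (forall (i j k : 'I_n), (j < k)%N -> forall x y : V,
       comm mul (C i j x) (C i k y) =
       C i k (comm mul (A k j x) y) + C i j (comm mul x (A j k y))))).
Proof.
move=> alg _ _.
have [mulDl mulDr] := (assoc_algebra_mulDl alg, assoc_algebra_mulDr alg).
apply: (iff_trans (HomRel_bopP mulDl mulDr C A)); split.
- move=> blocks; split=> [i j|i j k _]; last exact: blocks.
  exact/HomRel_blocks_diag.
- case=> diag lower i j k; case: (ltngtP j k) => [jk|kj|/val_inj <-].
  + exact: lower.
  + exact/HomRel_blocks_sym/lower.
  + exact/HomRel_blocks_diag.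
Qed.
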